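(* Let $G=(V,E)$ be a finite simple undirected graph, $k\ge1$ an integer, $S\subseteq V$ a $k$-plex, and $C\subseteq V$ with $C\cap S=\emptyset$. Let $v\in C$. Initialize $\mathrm{sup}(w)=k-|\overline{N}_w(S)|$ for each $w\in S$ and $D=N(v)\cap C$. Process the vertices $u\in N(v)\cap C$ one at a time in an arbitrary order; when processing $u$: if $\overline{N}_u(S)=\emptyset$, keep $u$ in $D$; otherwise choose $w\in\overline{N}_u(S)$ with $\mathrm{sup}(w)\le \mathrm{sup}(w')$ for all $w'\in\overline{N}_u(S)$ (ties broken arbitrarily), and if $\mathrm{sup}(w)>0$ decrease $\mathrm{sup}(w)$ by $1$ (keeping $u$ in $D$), while if $\mathrm{sup}(w)\le 0$ remove $u$ from $D$. Let $D$ be the resulting set after all vertices have been processed. Then every $k$-plex $S'$ with $S\cup\{v\}\subseteq S'\subseteq S\cup C$ satisfies $$|S'|\le |S|+k-|\overline{N}_v(S)|+|D|.$$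
   Context: $N(x)$ denotes the set of neighbors of $x$ in $G$ ($x\notin N(x)$). For $x\in V$ and $T\subseteq V$, $\overline{N}_x(T)=T\setminus N(x)$ is the set of non-neighbors of $x$ in $T$; if $x\in T$ then $x\in\overline{N}_x(T)$. A set $T\subseteq V$ is a $k$-plex if every vertex $u\in T$ satisfies $|N(u)\cap T|\ge |T|-k$ (equivalently $|\overline{N}_u(T)|\le k$). *)

From mathcomp Require Import all_boot all_order all_algebra.
Set Implicit Arguments. Unset Strict Implicit. Unset Printing Implicit Defensive.
Import Order.TTheory GRing.Theory Num.Theory.

Definition simple_graph (T : finType) (e : rel T) : Prop :=
  symmetric e /\ irreflexive e.

Definition nbhd (T : finType) (e : rel T) (x : T) : {set T} := [set y | e x y].

Definition nonnbhd (T : finType) (e : rel T) (x : T) (A : {set T}) : {set T} :=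
  A :\: nbhd e x.

(* A is a k-plex: every u in A has at most k non-neighbours in A (u included). *)
Definition kplex (T : finType) (e : rel T) (k : nat) (A : {set T}) : Prop :=
  forall u, u \in A -> #|nonnbhd e u A| <= k.

Definition sup_dec (T : finType) (sup : T -> int) (w : T) : T -> int :=
  fun x => if x == w then (sup x - 1)%R else sup x.

(* greedy_run e S sup D us sup' D' : processing the vertices of the list us in
   order, starting from state (sup, D), can end in state (sup', D'), where each
   step follows the rule of the paper; ties in the choice of w are arbitrary
   (any minimiser may be chosen), which is why this is a relation. *)
Inductive greedy_run (T : finType) (e : rel T) (S : {set T})
  : (T -> int) -> {set T} -> seq T -> (T -> int) -> {set T} -> Prop :=
| run_nil sup D : greedy_run e S sup D [::] sup D
| run_empty sup D u us sup' D' :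
    nonnbhd e u S = set0 ->
    greedy_run e S sup D us sup' D' ->
    greedy_run e S sup D (u :: us) sup' D'
| run_dec sup D u us w sup' D' :
    w \in nonnbhd e u S ->
    (forall w', w' \in nonnbhd e u S -> (sup w <= sup w')%R) ->
    (0 < sup w)%R ->
    greedy_run e S (sup_dec sup w) D us sup' D' ->
    greedy_run e S sup D (u :: us) sup' D'
| run_remove sup D u us w sup' D' :
    w \in nonnbhd e u S ->
    (forall w', w' \in nonnbhd e u S -> (sup w <= sup w')%R) ->
    (sup w <= 0)%R ->
    greedy_run e S sup (D :\ u) us sup' D' ->
    greedy_run e S sup D (u :: us) sup' D'.

Definition sup_init (T : finType) (e : rel T) (k : nat) (S : {set T}) : T -> int :=
  fun w => (k%:Z - (#|nonnbhd e w S|)%:Z)%R.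

From mathcomp Require Import all_boot all_order all_algebra.
From mathcomp Require Import zify.
Import Order.TTheory GRing.Theory Num.Theory.
Set Implicit Arguments. Unset Strict Implicit. Unset Printing Implicit Defensive.

(* Let A be the vertices of S' in N(v) \cap C.  For w in S, the k-plex S'
   contains the disjoint sets S and A, so #|Nbar_w(S)| + #|Nbar_w(A)| <= k:
   at most sup(w) vertices of A miss w.  By induction on the run, any A
   obeying these capacities has at most as many vertices as the run keeps:
   a kept vertex u is charged to the capacity it decrements, and a removed u
   (whose chosen w has sup(w) <= 0) cannot lie in A.  Hence
   |S'| <= |S \cap N(v)| + |A| + |Nbar_v(S')| <= |S \cap N(v)| + |D| + k. *)

Definition nonadj_count (T : finType) (e : rel T) (S A : {set T}) (w : T) :=
  #|[set u in A | w \in nonnbhd e u S]|.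

Section GreedyRun.

Variables (T : finType) (e : rel T) (S : {set T}).

Implicit Types (A B D : {set T}) (u w x : T) (us : seq T).

Local Notation cnt := (nonadj_count e S).

Lemma nonadj_countS A B w : A \subset B -> cnt A w <= cnt B w.
Proof.
move=> sAB; apply: subset_leq_card; apply/subsetP=> x; rewrite !inE.
by case/andP=> /(subsetP sAB) -> ->.
Qed.

Lemma nonadj_countD1 A u w :
  u \in A -> w \in nonnbhd e u S -> cnt A w = (cnt (A :\ u) w).+1.
Proof.
move=> Au wu; rewrite /nonadj_count (cardsD1 u) inE Au wu; congr _.+1.
by apply: eq_card => x; rewrite !inE andbA.
Qed.

(* Remove u if it lies in A, else some vertex of A missing w if there is one;
   the truncated predecessor covers the case where no vertex of A misses w. *)
Lemma nonadj_count_drop A u w : w \in nonnbhd e u S ->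
  exists2 A' : {set T}, A' \subset A :\ u &
    #|A| <= #|A'|.+1 /\ cnt A' w <= (cnt A w).-1.
Proof.
move=> wu; have [Au | uA] := boolP (u \in A).
  exists (A :\ u) => //; split; first by rewrite (cardsD1 u A) Au.
  by rewrite (nonadj_countD1 Au wu).
have [B0 | [x]] := set_0Vmem [set x in A | w \in nonnbhd e x S].
  exists A; first by rewrite subsetD1 subxx uA.
  by split=> //; rewrite /nonadj_count B0 cards0.
rewrite inE => /andP[Ax wx]; exists (A :\ x).
  by rewrite subsetD1 subsetDl !inE (negbTE uA) andbF.
by split; [rewrite (cardsD1 x A) Ax | rewrite (nonadj_countD1 Ax wx)].
Qed.

Lemma greedy_run_notin sup D us sup' D' x :
  greedy_run e S sup D us sup' D' -> x \notin us -> (x \in D') = (x \in D).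
Proof.
elim=> // {}sup {}D u {}us.
- by move=> ? ? _ _ IH; rewrite inE negb_or => /andP[_ /IH].
- by move=> ? ? ? _ _ _ _ IH; rewrite inE negb_or => /andP[_ /IH].
- move=> ? ? ? _ _ _ _ IH; rewrite inE negb_or => /andP[xu /IH ->].
  by rewrite !inE xu.
Qed.

Lemma card_setI_cons D u us : u \in D -> u \notin us ->
  #|D :&: [set:: u :: us]| = (#|D :&: [set:: us]|).+1.
Proof.
move=> uD uus; rewrite set_cons setIUr (setIidPr _) ?sub1set //.
by rewrite cardsU1 !inE (negbTE uus) andbF.
Qed.

Lemma card_setI_consS D u us :
  #|D :&: [set:: us]| <= #|D :&: [set:: u :: us]|.
Proof. by rewrite set_cons; apply/subset_leq_card/setIS/subsetUr. Qed.

Lemma subsetD1_cons A u us :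
  A \subset [set:: u :: us] -> A :\ u \subset [set:: us].
Proof.
move=> sA; apply/subsetP=> x; rewrite !inE => /andP[xu /(subsetP sA)].
by rewrite set_cons !inE (negbTE xu).
Qed.

Lemma greedy_run_capacity sup D us sup' D' :
  greedy_run e S sup D us sup' D' -> uniq us -> {subset us <= D} ->
  forall A, A \subset [set:: us] ->
  (forall w, w \in S -> (cnt A w)%:Z <= sup w)%R ->
  #|A| <= #|D' :&: [set:: us]|.
Proof.
elim=> [{}sup {}D | {}sup {}D u {}us {}sup' {}D' _ run IH
  | {}sup {}D u {}us w {}sup' {}D' wu _ sup_w run IH
  | {}sup {}D u {}us w {}sup' {}D' wu _ sup_w run IH].
- by move=> _ _ A; rewrite set_nil subset0 => /eqP ->; rewrite cards0.
- move=> /andP[uus uniq_us] usD A sA capA.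
  rewrite card_setI_cons ?(greedy_run_notin run) ?usD ?mem_head //.
  apply: leq_trans (_ : #|A| <= #|A :\ u|.+1) _.
    by rewrite (cardsD1 u A); case: (u \in A).
  rewrite ltnS; apply: IH => //; last first.
  + by move=> w' w'S; apply: le_trans (capA w' w'S); rewrite lez_nat nonadj_countS ?subsetDl.
  + exact: subsetD1_cons.
  by move=> x xus; apply: usD; rewrite inE xus orbT.
- move=> /andP[uus uniq_us] usD A sA capA.
  rewrite card_setI_cons ?(greedy_run_notin run) ?usD ?mem_head //.
  have [A' sA' [cardA' cntA']] := nonadj_count_drop A wu.
  apply: leq_trans cardA' _; rewrite ltnS; apply: IH => //.
  + by move=> x xus; apply: usD; rewrite inE xus orbT.
  + exact: subset_trans sA' (subsetD1_cons sA).
  have sAA' : A' \subset A by apply: subset_trans sA' (subsetDl _ _).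
  move=> w' w'S; rewrite /sup_dec; case: eqP => [-> | _].
    by have := capA w (subsetP (subsetDl _ _) w wu); lia.
  by apply: le_trans (capA w' w'S); rewrite lez_nat nonadj_countS.
- move=> /andP[uus uniq_us] usD A sA capA.
  have uA : u \notin A.
    apply/negP=> uA; have := capA w (subsetP (subsetDl _ _) w wu).
    by rewrite (nonadj_countD1 uA wu); lia.
  apply: leq_trans (card_setI_consS _ u _); apply: IH => //.
    move=> x xus; rewrite !inE usD ?inE ?xus ?orbT // andbT.
    by apply: contraNneq uus => <-.
  by apply: subset_trans (subsetD1_cons sA); rewrite subsetD1 subxx uA.
Qed.

End GreedyRun.

Lemma nonadj_count_le_nonnbhd (T : finType) (e : rel T) (S A : {set T}) w :
  symmetric e -> nonadj_count e S A w <= #|nonnbhd e w A|.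
Proof.
move=> esym; apply/subset_leq_card/subsetP=> u; rewrite !inE esym.
by case/andP=> Au /andP[-> _]; rewrite Au.
Qed.

Lemma card_nonnbhdU (T : finType) (e : rel T) (S A : {set T}) w :
  S :&: A = set0 ->
  #|nonnbhd e w (S :|: A)| = #|nonnbhd e w S| + #|nonnbhd e w A|.
Proof.
move=> SA0; rewrite /nonnbhd setDUl -cardsUI.
suff -> : (S :\: nbhd e w) :&: (A :\: nbhd e w) = set0 by rewrite cards0 addn0.
by apply/eqP; rewrite -subset0 -SA0 setISS ?subsetDl.
Qed.

Lemma kplex_nonadj_count (T : finType) (e : rel T) k (S A S' : {set T}) w :
  symmetric e -> kplex e k S' -> S :|: A \subset S' -> S :&: A = set0 ->
  w \in S -> #|nonnbhd e w S| + nonadj_count e S A w <= k.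
Proof.
move=> esym kS' sSA SA0 wS; apply: leq_trans (kS' w _); last first.
  by apply: (subsetP sSA); rewrite inE wS.
apply: (@leq_trans #|nonnbhd e w (S :|: A)|); last exact/subset_leq_card/setSD.
by rewrite card_nonnbhdU // leq_add2l nonadj_count_le_nonnbhd.
Qed.

Lemma card_split_nbhd (T : finType) (e : rel T) (S C S' : {set T}) v :
  S' \subset S :|: C ->
  #|S'| <= #|S :&: nbhd e v| + #|S' :&: (nbhd e v :&: C)| + #|nonnbhd e v S'|.
Proof.
move=> sS'; rewrite -(cardsID (nbhd e v) S') leq_add2r -cardsUI.
apply/leq_trans/leq_addr/subset_leq_card/subsetP=> x; rewrite !inE.
case/andP=> xS' xv; have := subsetP sS' x xS'; rewrite !inE xv xS' /=.
by case/orP=> ->; rewrite ?orbT.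
Qed.

Theorem lemma6 (T : finType) (e : rel T) (k : nat) (S C : {set T}) (v : T)
  (ord : seq T) (supf : T -> int) (D : {set T}) :
  simple_graph e ->
  1 <= k ->
  kplex e k S ->
  C :&: S = set0 ->
  v \in C ->
  uniq ord ->
  (forall x, (x \in ord) = (x \in nbhd e v :&: C)) ->
  greedy_run e S (sup_init e k S) (nbhd e v :&: C) ord supf D ->
  forall S' : {set T},
    kplex e k S' -> v |: S \subset S' -> S' \subset S :|: C ->
    ((#|S'|)%:Z <= (#|S|)%:Z + k%:Z - (#|nonnbhd e v S|)%:Z + (#|D|)%:Z)%R.
Proof.
move=> [esym _] _ _ CS0 _ uniq_ord ord_def run S' kS' svS' sS'.
set A := S' :&: (nbhd e v :&: C).
have SA0 : S :&: A = set0.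
  apply/setP=> x; move/setP: CS0 => /(_ x); rewrite !inE.
  by case: (x \in C); case: (x \in S); rewrite ?andbF.
have sSA : S :|: A \subset S'.
  by rewrite subUset subsetIl andbT; apply: subset_trans svS'; apply: subsetUr.
have capA w : w \in S -> ((nonadj_count e S A w)%:Z <= sup_init e k S w)%R.
  move=> wS; have := kplex_nonadj_count esym kS' sSA SA0 wS.
  by rewrite /sup_init; lia.
have cardA : #|A| <= #|D|.
  apply: leq_trans (greedy_run_capacity run uniq_ord _ _ capA) _.
  - by move=> x; rewrite ord_def.
  - by apply/subsetP=> x; rewrite !inE ord_def !inE => /andP[_].
  - exact/subset_leq_card/subsetIl.
have := card_split_nbhd e v sS'; rewrite -/A.
have := kS' v (subsetP svS' v (setU11 v S)).
have := cardsID (nbhd e v) S; rewrite /nonnbhd; lia.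
Qed.
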